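(* Let $n$ be a positive integer, $\lambda$ an infinite cardinal, and $\tau$ a shift-continuous feebly compact $T_1$-topology on the semilattice $\exp_n\lambda$. Then for every open neighbourhood $U(0)$ of the zero $0=\varnothing$ in $(\exp_n\lambda,\tau)$ there exist finitely many $x_1,\ldots,x_m\in\lambda$ such that $$\exp_n\lambda\setminus\operatorname{cl}_{\exp_n\lambda}(U(0))\subseteq{\uparrow}\{x_1\}\cup\cdots\cup{\uparrow}\{x_m\}.$$
   Context: For a positive integer $n$ and a cardinal $\lambda$, $\exp_n\lambda=\{A\subseteq\lambda\colon |A|\leqslant n\}$, regarded as a semilattice under $\cap$; its natural order is inclusion and its zero is $\varnothing$. For $e$ in a semilattice, ${\uparrow}e=\{f\colon e\leqslant f\}$; so ${\uparrow}\{x\}=\{A\in\exp_n\lambda\colon x\in A\}$. A topology on a semilattice is shift-continuous if the semilattice operation is separately continuous. A topological space is feebly compact if every locally finite open cover of it is finite. *)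

From HB Require Import structures.
From mathcomp Require Import all_boot all_order.
From mathcomp Require Import boolp classical_sets cardinality.
From mathcomp Require Import finmap.

Set Implicit Arguments.
Unset Strict Implicit.
Unset Printing Implicit Defensive.

Local Open Scope classical_set_scope.

Definition exp_set (n : nat) (L : choiceType) : Type :=
  {A : {fset L} | (#|` A| <= n)%N}.

Lemma expn_meet_subproof n (L : choiceType) (A B : exp_set n L) :
  (#|` fsetI (sval A) (sval B)| <= n)%N.
Proof.
apply: leq_trans (fsubset_leq_card (fsubsetIl _ _)) _.
exact: (proj2_sig A).
Qed.

Definition expn_meet n (L : choiceType) (A B : exp_set n L) : exp_set n L :=
  exist _ (fsetI (sval A) (sval B)) (expn_meet_subproof A B).

Definition expn_zero n (L : choiceType) : exp_set n L :=
  exist _ fset0 (leq0n n : (#|` (fset0 : {fset L})| <= n)%N).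

Definition up_singleton n (L : choiceType) (x : L) : set (exp_set n L) :=
  [set A | x \in sval A].

Section Topo.
Variable X : Type.
Variable op : set (set X).

Definition is_topology : Prop :=
  [/\ op setT,
      (forall U V, op U -> op V -> op (U `&` V)) &
      (forall F : set (set X), F `<=` op -> op (\bigcup_(U in F) U))].

Definition closure_of (A : set X) : set X :=
  [set x | forall U, op U -> U x -> U `&` A !=set0].

Definition T1_top : Prop :=
  forall x y : X, x <> y -> exists U, [/\ op U, U x & ~ U y].

Definition locally_finite_family (F : set (set X)) : Prop :=
  forall x, exists W, [/\ op W, W x &
     finite_set [set U | F U /\ U `&` W !=set0]].

Definition feebly_compact : Prop :=
  forall F : set (set X), F `<=` op -> \bigcup_(U in F) U = setT ->
    locally_finite_family F -> finite_set F.

Definition continuous_map (f : X -> X) : Prop :=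
  forall U, op U -> op (f @^-1` U).

Definition shift_continuous (m : X -> X -> X) : Prop :=
  forall a, continuous_map (m a) /\ continuous_map (fun x => m x a).
End Topo.

From HB Require Import structures.
From mathcomp Require Import all_boot all_order.
From mathcomp Require Import boolp classical_sets cardinality.
From mathcomp Require Import finmap.

Set Implicit Arguments.
Unset Strict Implicit.
Unset Printing Implicit Defensive.

Local Open Scope classical_set_scope.

(* Were the complement of cl U0 not covered by finitely many ↑{x}, one could
   choose inductively isolated points B_0, B_1, ... outside cl U0 with pairwise
   disjoint supports. Their singletons, together with the complement of
   {B_k | k}, which is open, form an infinite locally finite open cover,
   contradicting feeble compactness. *)

Section OpenSets.
Variables (X : Type) (op : set (set X)).
Hypothesis top : is_topology op.

Lemma openT : op setT. Proof. by case: top. Qed.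

Lemma openI (U V : set X) : op U -> op V -> op (U `&` V).
Proof. by case: top => _ + _; apply. Qed.

Lemma open_locally (A : set X) :
  (forall x, A x -> exists W, [/\ op W, W x & W `<=` A]) -> op A.
Proof.
case: top => _ _ openU Aloc.
have -> : A = \bigcup_(W in [set W | op W /\ W `<=` A]) W.
  apply/seteqP; split => [x Ax | x [W [_ WA] Wx]]; last exact: WA.
  by have [W [oW Wx WA]] := Aloc x Ax; exists W.
by apply: openU => W [].
Qed.

Lemma open_bigcap_seq (I : eqType) (s : seq I) (P : I -> set X) :
  (forall i, op (P i)) -> op [set x | forall i, i \in s -> P i x].
Proof.
move=> Popen; elim: s => [|i s IH].
  have -> : [set x | forall i, i \in [::] -> P i x] = setT by apply/seteqP.
  exact: openT.
have -> : [set x | forall j, j \in i :: s -> P j x] =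
          P i `&` [set x | forall j, j \in s -> P j x].
  apply/seteqP; split => [x Px | x [Pix Psx] j]; last first.
    by rewrite inE => /orP[/eqP -> // | /Psx].
  by split => [|j js]; apply: Px; rewrite inE ?js ?orbT ?eqxx.
exact: openI.
Qed.

Lemma open_setC1 (y : X) : T1_top op -> op (~` [set y]).
Proof.
move=> T1; apply: open_locally => x /= xy.
have [U [oU Ux Uy]] := T1 x y xy.
by exists U; split => // z Uz /= zy; apply: Uy; rewrite -zy.
Qed.

Lemma open_setC_closure (A : set X) : op (~` closure_of op A).
Proof.
apply: open_locally => x /existsNP [W /not_implyP [oW /not_implyP [Wx WA]]].
by exists W; split => // z Wz Az; apply: WA; exact: Az W oW Wz.
Qed.

Lemma subset_closure (A : set X) : A `<=` closure_of op A.
Proof. by move=> x Ax U _ Ux; exists x. Qed.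

Lemma isolated_seq_not_feebly_compact (B : nat -> X) :
  injective B -> (forall k, op [set B k]) -> op (~` range B) ->
  ~ feebly_compact op.
Proof.
move=> Binj Bopen Ropen feebly.
pose F := range (fun k => [set B k]) `|` [set ~` range B].
have Fopen : F `<=` op by move=> W [[k _ <-] | ->].
have Fcover : \bigcup_(W in F) W = setT.
  apply/seteqP; split => // x _; have [[k _ Bkx] | xR] := pselect (range B x).
    by exists [set B k]; [left; exists k | rewrite /= Bkx].
  by exists (~` range B); [right |].
have Flf : locally_finite_family op F.
  move=> x; have [[k _ <-] | xR] := pselect (range B x).
    exists [set B k]; split => //.
    apply: sub_finite_set (finite_set1 [set B k]).
    move=> W [[[j _ <-] | ->] [y [/= Wy /= yk]]].
      by move: yk; rewrite Wy => /Binj ->.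
    by case: Wy; exists k.
  exists (~` range B); split => //; apply: sub_finite_set (finite_set1 _).
  by move=> W [[[j _ <-] | -> //] [y [/= -> /=]]]; case; exists j.
have : finite_set ((fun k => [set B k]) @^-1` F).
  apply: finite_preimage (feebly F Fopen Fcover Flf) => j k _ _ jk.
  by apply: Binj; have : [set B j] (B j) by []; rewrite jk.
move=> /(sub_finite_set _) Ffin; apply: infinite_nat; apply: Ffin => k _.
by left; exists k.
Qed.

End OpenSets.

Section Trail.
Variables (T : choiceType) (g : seq T -> {fset T}).
Hypothesis g_fresh : forall s x, x \in g s -> x \notin s.

Fixpoint trail (k : nat) : seq T :=
  if k is k'.+1 then enum_fset (g (trail k')) ++ trail k' else [::].

Lemma mem_trail j k x : (j < k)%N -> x \in g (trail j) -> x \in trail k.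
Proof.
elim: k => // k IH; rewrite ltnS leq_eqVlt /= mem_cat => /orP[/eqP -> -> //|].
by move=> /IH /[apply] ->; rewrite orbT.
Qed.

Lemma trail_disjoint j k x :
  x \in g (trail j) -> x \in g (trail k) -> j = k.
Proof.
wlog jk : j k / (j <= k)%N => [hwlog xj xk|].
  by case/orP: (leq_total j k) => ?; [|symmetry]; apply: hwlog.
move=> xj xk; apply/eqP; rewrite eqn_leq jk leqNgt; apply/negP => /mem_trail.
by move=> /(_ x xj); apply/negP/g_fresh.
Qed.

End Trail.

Section ExpSemilattice.
Variables (n : nat) (L : choiceType) (op : set (set (exp_set n L))).
Hypotheses (n_gt0 : (0 < n)%N) (top : is_topology op).
Hypotheses (meet_cont : shift_continuous op (@expn_meet n L)) (T1 : T1_top op).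

Definition exp1 (x : L) : exp_set n L :=
  exist _ [fset x]%fset (eq_ind_r (fun k => (k <= n)%N) n_gt0 (cardfs1 x)).

(* ↑{x} and its complement are the preimages of ~{∅} and ~{{x}} under the
   translation D ↦ {x} ∩ D. *)
Lemma open_up1 x : op (up_singleton x).
Proof.
have := (meet_cont (exp1 x)).1 _ (open_setC1 top (expn_zero n L) T1).
congr op; apply/seteqP; split => D /=; rewrite /up_singleton /=.
  move=> D0; apply: contrapT => /negP xD; apply: D0.
  by apply: val_inj => /=; rewrite fsetIC fsetI1 (negbTE xD).
move=> xD /(congr1 sval) /=; rewrite fsetIC fsetI1 xD => /eqP.
by rewrite -cardfs_eq0 cardfs1.
Qed.

Lemma open_notup1 x : op (~` up_singleton x).
Proof.
have := (meet_cont (exp1 x)).1 _ (open_setC1 top (exp1 x) T1).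
congr op; apply/seteqP; split => D /=; rewrite /up_singleton /=.
  by move=> Dx xD; apply: Dx; apply: val_inj => /=; rewrite fsetIC fsetI1 xD.
move=> xD /(congr1 sval) /=; rewrite fsetIC fsetI1 => /eqP.
by case: ifP => // _; rewrite eq_sym -cardfs_eq0 cardfs1.
Qed.

Lemma open_fsuperset (A : {fset L}) :
  op [set D : exp_set n L | (A `<=` sval D)%fset].
Proof.
have -> : [set D : exp_set n L | (A `<=` sval D)%fset] =
          [set D | forall x, x \in enum_fset A -> up_singleton x D].
  by apply/seteqP; split => D /= => [/fsubsetP AD x /AD | AD]; apply/fsubsetP.
exact: (open_bigcap_seq top _ open_up1).
Qed.

Lemma open_avoid (ys : seq L) :
  op [set D : exp_set n L | forall y, y \in ys -> ~ up_singleton y D].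
Proof. exact: (open_bigcap_seq top ys open_notup1). Qed.

(* A point B of maximal cardinality in O is isolated: {B} = O ∩ ↑B. *)
Lemma open_has_isolated (O : set (exp_set n L)) :
  op O -> O !=set0 -> exists2 B, O B & op [set B].
Proof.
move=> Oopen [A OA].
pose P m := `[< exists2 D, O D & #|` sval D|%fset = m >].
have exP : exists m, P m by exists #|` sval A|%fset; apply/asboolP; exists A.
have ubP m : P m -> (m <= n)%N.
  by move=> /asboolP [D _ <-]; exact: (proj2_sig D).
case: (ex_maxnP exP ubP) => m /asboolP [B OB Bm] Bmax.
exists B => //.
have -> : [set B] = O `&` [set D | (sval B `<=` sval D)%fset].
  apply/seteqP; split => D /= => [-> | [OD BD]]; first by rewrite fsubset_refl.
  apply: val_inj; apply/eqP; rewrite eq_sym eqEfcard BD Bm.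
  by apply: Bmax; apply/asboolP; exists D.
exact: openI (open_fsuperset _).
Qed.

Section DisjointSupports.
Variables (U0 : set (exp_set n L)) (B : nat -> exp_set n L).
Hypotheses (U0_open : op U0) (U0_zero : U0 (expn_zero n L)).
Hypothesis B_notU0 : forall k, ~ U0 (B k).
Hypothesis B_disj : forall j k x, x \in sval (B j) -> x \in sval (B k) -> j = k.

Lemma disjoint_supports_inj : injective B.
Proof.
move=> j k Bjk; have [x xBj] : exists x, x \in sval (B j).
  apply/fset0Pn/negP => /eqP Bj0; apply: (@B_notU0 j).
  by rewrite (_ : B j = expn_zero n L) //; exact: val_inj.
by apply: (B_disj xBj); rewrite -Bjk.
Qed.

(* Near the zero, U0 misses range B; near C ∋ x, ↑{x} meets range B at most
   in the unique B k0 containing x. *)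
Lemma open_setC_range : op (~` range B).
Proof.
apply: (open_locally top) => C RC.
have [C0 | /fset0Pn [x xC]] := eqVneq (sval C) fset0.
  exists U0; split => //.
    by rewrite (_ : C = expn_zero n L) //; exact: val_inj.
  by move=> D U0D [k _ BkD]; apply: (@B_notU0 k); rewrite BkD.
have [k0 Bk0] : exists k0, forall k, x \in sval (B k) -> k = k0.
  have [[k1 xk1] | none] := pselect (exists k, x \in sval (B k)).
    by exists k1 => k /B_disj /(_ xk1).
  by exists 0%N => k xk; case: none; exists k.
exists (up_singleton x `&` ~` [set B k0]); split.
- exact: openI (open_up1 x) (open_setC1 top _ T1).
- by split => //= C_Bk0; apply: RC; exists k0.
- move=> D [xD notBk0] [k _ BkD]; apply: notBk0.
  by rewrite -BkD /= -(Bk0 k) // BkD.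
Qed.

End DisjointSupports.

End ExpSemilattice.

Theorem proposition8 (n : nat) (L : choiceType)
    (op : set (set (exp_set n L))) :
  (0 < n)%N ->
  infinite_set [set: L] ->
  is_topology op ->
  shift_continuous op (@expn_meet n L) ->
  feebly_compact op ->
  T1_top op ->
  forall U0 : set (exp_set n L), op U0 -> U0 (@expn_zero n L) ->
  exists xs : seq L,
    ~` closure_of op U0 `<=` \bigcup_(x in [set x | x \in xs]) @up_singleton n L x.
Proof.
move=> n_gt0 _ top meet_cont feebly T1 U0 U0_open U0_zero.
apply: contrapT => not_covered.
have isolated_avoiding (ys : seq L) : exists B : exp_set n L,
    [/\ ~ closure_of op U0 B, op [set B] & forall y, y \in ys -> y \notin sval B].
  pose O := ~` closure_of op U0 `&`
            [set D | forall y, y \in ys -> ~ up_singleton y D].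
  have O_open : op O.
    exact: openI (open_setC_closure _ _) (open_avoid n_gt0 top meet_cont T1 ys).
  have O_neq0 : O !=set0.
    apply: contrapT => O0; apply: not_covered; exists ys => A nclA.
    apply: contrapT => Aunc; apply: O0; exists A; split => // y yys yA.
    by apply: Aunc; exists y.
  have [B [nclB Bavoid] Bopen] :=
    open_has_isolated n_gt0 top meet_cont T1 O_open O_neq0.
  by exists B; split => // y /Bavoid /negP.
have [g gP] := choice isolated_avoiding.
pose prev := trail (fun s => sval (g s)); pose B k := g (prev k).
have B_notU0 k : ~ U0 (B k).
  have [nclB _ _] := gP (prev k).
  by move=> U0B; apply: nclB; exact: subset_closure.
have B_disj j k x : x \in sval (B j) -> x \in sval (B k) -> j = k.
  have g_fresh s y : y \in sval (g s) -> y \notin s.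
    by have [_ _ fresh] := gP s; apply/contraL/fresh.
  exact: (@trail_disjoint _ (fun s => sval (g s)) g_fresh).
move: feebly; apply: (isolated_seq_not_feebly_compact (B := B)).
- exact: disjoint_supports_inj U0_zero B_notU0 B_disj.
- by move=> k; have [_ ? _] := gP (prev k).
- exact: open_setC_range U0_open U0_zero B_notU0 B_disj.
Qed.
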